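(* Let $d<n$, let $\sigma\in\mathbb R^{d\times n}$ have full rank $d$, $A\in\mathbb R^{n\times n}$ symmetric positive definite, $h>0$, $Z\in\mathbb R^n$, and $\xi\in\mathrm{Im}\,\sigma^{\mathrm{tr}}$. Let $\alpha'>0$ be such that $x^{\mathrm{tr}}A^{-1}x\ge\alpha'|x|^2$ for all $x\in\mathbb R^n$, and assume $|\xi|<h\sqrt{\alpha'}$ and $A^{-1}(\mathrm{Ker}\,\sigma)=\mathrm{Ker}\,\sigma$. Then $\bar\phi:=\Pi(Z)+\big(\Pi^\perp(Z)^{\mathrm{tr}}A^{-1}\Pi^\perp(Z)\big)^{1/2}\big(h^2-\xi^{\mathrm{tr}}A\xi\big)^{-1/2}A\xi$ is the unique minimizer over $\phi\in\mathrm{Im}\,\sigma^{\mathrm{tr}}$ of $F(\phi):=-\xi^{\mathrm{tr}}\phi+h\big((Z-\phi)^{\mathrm{tr}}A^{-1}(Z-\phi)\big)^{1/2}$.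
   Context: $\Pi$ and $\Pi^\perp$ denote the orthogonal projections of $\mathbb R^n$ onto $\mathrm{Im}\,\sigma^{\mathrm{tr}}$ and $\mathrm{Ker}\,\sigma$, respectively. *)

From mathcomp Require Import all_boot all_order all_algebra.
From mathcomp Require Import classical_sets reals.
Set Implicit Arguments. Unset Strict Implicit. Unset Printing Implicit Defensive.
Import Order.TTheory GRing.Theory Num.Theory.
Local Open Scope ring_scope.
Local Open Scope classical_set_scope.

Definition dotv {R : realType} {n : nat} (x y : 'cV[R]_n) : R := (x^T *m y) 0 0.
Definition normv {R : realType} {n : nat} (x : 'cV[R]_n) : R := Num.sqrt (dotv x x).

Definition qform {R : realType} {n : nat} (M : 'M[R]_n) (x : 'cV[R]_n) : R :=
  (x^T *m M *m x) 0 0.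

Definition imT {R : realType} {d n : nat} (s : 'M[R]_(d, n)) : set 'cV[R]_n :=
  [set x | exists y : 'cV[R]_d, x = s^T *m y].
Definition kerm {R : realType} {d n : nat} (s : 'M[R]_(d, n)) : set 'cV[R]_n :=
  [set x | s *m x = 0].

Definition orthproj {R : realType} {n : nat} (S : set 'cV[R]_n) (z : 'cV[R]_n)
  : 'cV[R]_n :=
  xget 0 [set p | S p /\ forall s, S s -> dotv s (z - p) = 0].

Definition Pi {R : realType} {d n : nat} (s : 'M[R]_(d, n)) := orthproj (imT s).
Definition Piperp {R : realType} {d n : nat} (s : 'M[R]_(d, n)) := orthproj (kerm s).

Definition sym_posdef {R : realType} {n : nat} (A : 'M[R]_n) : Prop :=
  A^T = A /\ forall x : 'cV[R]_n, x != 0 -> 0 < qform A x.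

From mathcomp Require Import all_boot all_order all_algebra.
From mathcomp Require Import classical_sets reals.
From mathcomp Require Import ring lra.
Import Order.TTheory GRing.Theory Num.Theory.
Local Open Scope ring_scope.
Local Open Scope classical_set_scope.
Set Implicit Arguments. Unset Strict Implicit.

(* Work in the inner product <x, y> := x^T A^-1 y.  Since A^-1 preserves
   Ker sigma, Im sigma^T and Ker sigma are orthogonal for it, so writing
   phi = Pi Z + u with u in Im sigma^T gives
     F phi = - xi . Pi Z - <A xi, u> + h sqrt (c + <u, u>),
   where c = <Pi^perp Z, Pi^perp Z>.  Completing the square around t A xi, with
   t^2 (h^2 - xi^T A xi) = c, and Cauchy-Schwarz for <_, _> show that this
   is at least t (h^2 - xi^T A xi), with equality only at u = t A xi.
   The bound |xi| < h sqrt alpha' is what makes xi^T A xi < h^2. *)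

Section BilinearForm.
Variables (R : realType) (n : nat).
Implicit Types (M : 'M[R]_n) (x y z : 'cV[R]_n) (a : R).

Definition bform M x y : R := (x^T *m M *m y) 0 0.

Lemma mx11_subE (P Q : 'M[R]_1) : (P - Q) 0 0 = P 0 0 - Q 0 0.
Proof. by rewrite !mxE. Qed.

Lemma mx11_trE (P : 'M[R]_1) : P 0 0 = P^T 0 0.
Proof. by rewrite mxE. Qed.

Lemma bformE M x y : bform M x y = dotv x (M *m y).
Proof. by rewrite /bform /dotv mulmxA. Qed.

Lemma dotvE x y : dotv x y = bform 1%:M x y.
Proof. by rewrite bformE mul1mx. Qed.

Lemma bformBl M x y z : bform M (x - y) z = bform M x z - bform M y z.
Proof. by rewrite /bform linearB /= !mulmxBl mx11_subE. Qed.

Lemma bformBr M x y z : bform M z (x - y) = bform M z x - bform M z y.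
Proof. by rewrite /bform !mulmxBr mx11_subE. Qed.

Lemma bformZl M a x z : bform M (a *: x) z = a * bform M x z.
Proof. by rewrite /bform linearZ /= -!scalemxAl mxE. Qed.

Lemma bformZr M a x z : bform M z (a *: x) = a * bform M z x.
Proof. by rewrite /bform -!scalemxAr mxE. Qed.

Lemma bformC M x y : bform M x y = bform M^T y x.
Proof. by rewrite /bform mx11_trE !trmx_mul !trmxK mulmxA. Qed.

Lemma dotvC x y : dotv x y = dotv y x.
Proof. by rewrite !dotvE bformC trmx1. Qed.

Lemma bform_sqrB M x y a :
  bform M (x - a *: y) (x - a *: y)
  = bform M x x - a * (bform M x y + bform M y x) + a ^+ 2 * bform M y y.
Proof. by rewrite !bformBl !bformBr !bformZl !bformZr; ring. Qed.

Lemma bform_sqrB_orth M x y : bform M x y = 0 -> bform M y x = 0 ->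
  bform M (x - y) (x - y) = bform M x x + bform M y y.
Proof. by move=> xy yx; rewrite !bformBl !bformBr xy yx; ring. Qed.

Lemma dotv_sum x : dotv x x = \sum_i x i 0 ^+ 2.
Proof. by rewrite /dotv mxE; apply: eq_bigr => i _; rewrite mxE expr2. Qed.

Lemma dotv_ge0 x : 0 <= dotv x x.
Proof. by rewrite dotv_sum sumr_ge0 // => i _; rewrite sqr_ge0. Qed.

Lemma dotv_eq0 x : dotv x x = 0 -> x = 0.
Proof.
rewrite dotv_sum => /psumr_eq0P sum0; apply/matrixP => i j; rewrite ord1 mxE.
by apply/eqP; rewrite -sqrf_eq0 sum0 // => k _; rewrite sqr_ge0.
Qed.

Lemma normv_lt x r : 0 < r -> (normv x < r) = (dotv x x < r ^+ 2).
Proof.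
by move=> r_gt0; rewrite -[dotv x x < _]ltr_sqrt ?exprn_gt0 // sqrtr_sqr gtr0_norm.
Qed.

Lemma dotv_gt0 x : x != 0 -> 0 < dotv x x.
Proof.
by move=> x0; rewrite lt_def dotv_ge0 andbT; apply: contra x0 => /eqP/dotv_eq0->.
Qed.

End BilinearForm.

Section PosDefForm.
Variables (R : realType) (n : nat) (B : 'M[R]_n).
Hypotheses (B_sym : B^T = B) (B_pos : forall x : 'cV[R]_n, x != 0 -> 0 < bform B x x).
Implicit Types (x y : 'cV[R]_n).

Lemma bform_sym x y : bform B x y = bform B y x.
Proof. by rewrite bformC B_sym. Qed.

Lemma bform_ge0 x : 0 <= bform B x x.
Proof.
have [->|x0] := eqVneq x 0; last exact/ltW/B_pos.
by rewrite /bform trmx0 !mul0mx mxE.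
Qed.

Lemma bform_eq0 x : bform B x x <= 0 -> x = 0.
Proof. by apply: contraTeq => /B_pos; rewrite ltNge. Qed.

Lemma bform_cauchy_schwarz x y : bform B x y ^+ 2 <= bform B x x * bform B y y.
Proof.
have [->|y0] := eqVneq y 0.
  by rewrite /bform !mulmx0 !mxE expr0n mulr0.
have qy_gt0 := B_pos y0.
have := bform_ge0 (x - (bform B x y / bform B y y) *: y).
rewrite bform_sqrB (bform_sym y x) => /(mulr_ge0 (ltW qy_gt0)).
set b := bform B x y; set qy := bform B y y.
have -> : qy * (bform B x x - b / qy * (b + b) + (b / qy) ^+ 2 * qy)
        = bform B x x * qy - b ^+ 2 by field; rewrite gt_eqF.
by rewrite subr_ge0.
Qed.

End PosDefForm.

Section ReducedCost.
Variables (R : realType) (n : nat).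
Implicit Types (B : 'M[R]_n) (w u : 'cV[R]_n) (h c : R).

Definition reduced_cost B w h c u : R :=
  - bform B w u + h * Num.sqrt (c + bform B u u).

Definition reduced_argmin B w h c : 'cV[R]_n :=
  (Num.sqrt c / Num.sqrt (h ^+ 2 - bform B w w)) *: w.

Variables (B : 'M[R]_n) (w : 'cV[R]_n) (h c : R).
Hypotheses (B_sym : B^T = B) (B_pos : forall x : 'cV[R]_n, x != 0 -> 0 < bform B x x).
Hypotheses (h_gt0 : 0 < h) (c_ge0 : 0 <= c) (w_lt_h : bform B w w < h ^+ 2).

Let a := bform B w w.
Let t := Num.sqrt c / Num.sqrt (h ^+ 2 - a).
Let m := reduced_argmin B w h c.

Let t_ge0 : 0 <= t.
Proof. by rewrite divr_ge0 ?sqrtr_ge0. Qed.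

Let t_sqr : t ^+ 2 * (h ^+ 2 - a) = c.
Proof.
have gap_gt0 : 0 < h ^+ 2 - a by rewrite subr_gt0.
by rewrite expr_div_n !sqr_sqrtr ?(ltW gap_gt0) // divfK ?gt_eqF.
Qed.

Lemma reduced_cost_argmin : reduced_cost B w h c m = t * (h ^+ 2 - a).
Proof.
rewrite /reduced_cost /m /reduced_argmin -/a -/t bformZl !bformZr -/a.
have -> : c + t * (t * a) = (t * h) ^+ 2 by rewrite -t_sqr; ring.
rewrite sqrtr_sqr ger0_norm; first ring.
by rewrite mulr_ge0 ?(ltW h_gt0).
Qed.

(* Completing the square around [m] and Cauchy-Schwarz for [w] and [u - m]. *)
Lemma reduced_cost_sqr_bound u :
  (t * (h ^+ 2 - a) + bform B w u) ^+ 2 + (h ^+ 2 - a) * bform B (u - m) (u - m)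
  <= (h * Num.sqrt (c + bform B u u)) ^+ 2.
Proof.
have q_ge0 := bform_ge0 B_pos u.
rewrite exprMn sqr_sqrtr ?addr_ge0 //.
have := bform_cauchy_schwarz B_sym B_pos w (u - m).
rewrite /m /reduced_argmin -/a -/t bform_sqrB !bformBr !bformZr (bform_sym B_sym u w) -/a.
rewrite -t_sqr; nra.
Qed.

Let qgap_ge0 u : 0 <= (h ^+ 2 - a) * bform B (u - m) (u - m).
Proof. by rewrite mulr_ge0 ?bform_ge0 // subr_ge0 ltW. Qed.

Lemma reduced_cost_min u : reduced_cost B w h c m <= reduced_cost B w h c u.
Proof.
rewrite reduced_cost_argmin /reduced_cost.
have := reduced_cost_sqr_bound u; have := qgap_ge0 u.
have := mulr_ge0 (ltW h_gt0) (sqrtr_ge0 (c + bform B u u)).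
set X := t * _ + _; set Y := h * _ => Y_ge0 gap_ge0 bound.
have : X <= Y by nra.
by rewrite /X; lra.
Qed.

Lemma reduced_cost_argmin_unique u :
  reduced_cost B w h c u <= reduced_cost B w h c m -> u = m.
Proof.
rewrite reduced_cost_argmin /reduced_cost.
have := reduced_cost_sqr_bound u; have := qgap_ge0 u.
have := mulr_ge0 (ltW h_gt0) (sqrtr_ge0 (c + bform B u u)).
set X := t * _ + _; set Y := h * _ => Y_ge0 gap_ge0 bound le_um.
have Y_le_X : Y <= X by rewrite /X; lra.
have sqr_le : Y ^+ 2 <= X ^+ 2 by rewrite ler_pXn2r // ?nnegrE ?(le_trans Y_ge0).
have : (h ^+ 2 - a) * bform B (u - m) (u - m) <= 0 by lra.
rewrite pmulr_rle0 ?subr_gt0 // => /(bform_eq0 B_pos) /eqP.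
by rewrite subr_eq0 => /eqP.
Qed.

End ReducedCost.

Section RowSpaceKernel.
Variables (R : realType) (d n : nat) (s : 'M[R]_(d, n)).
Implicit Types (x y z u k : 'cV[R]_n).

Lemma imtD x y : imT s x -> imT s y -> imT s (x + y).
Proof. by move=> [a ->] [b ->]; exists (a + b); rewrite mulmxDr. Qed.

Lemma imtZ a x : imT s x -> imT s (a *: x).
Proof. by move=> [b ->]; exists (a *: b); rewrite scalemxAr. Qed.

Lemma imtB x y : imT s x -> imT s y -> imT s (x - y).
Proof. by move=> sx sy; rewrite -scaleN1r; apply: imtD => //; apply: imtZ. Qed.

Lemma kermB x y : kerm s x -> kerm s y -> kerm s (x - y).
Proof. by rewrite /kerm /= mulmxBr => -> ->; rewrite subrr. Qed.

Lemma dotv_imt_kerm u k : imT s u -> kerm s k -> dotv u k = 0.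
Proof. by move=> [y ->] sk; rewrite /dotv trmx_mul trmxK -mulmxA sk mulmx0 mxE. Qed.

Lemma kerm_orth x : (forall u, imT s u -> dotv u x = 0) -> kerm s x.
Proof.
move=> orth; apply: dotv_eq0; have := orth (s^T *m (s *m x)) (ex_intro _ _ erefl).
by rewrite /dotv trmx_mul trmxK mulmxA.
Qed.

Hypothesis s_rank : \rank s = d.

Lemma unitmx_mul_tr : s *m s^T \in unitmx.
Proof.
rewrite -row_free_unit; apply: inj_row_free => v vssT0.
have s_free : row_free s by rewrite /row_free s_rank.
apply: (row_free_inj s_free); rewrite mul0mx.
suff : (v *m s)^T = 0 by move/(congr1 trmx); rewrite trmxK trmx0.
apply: dotv_eq0.
by rewrite /dotv trmxK trmx_mul mulmxA -(mulmxA v) vssT0 mul0mx mxE.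
Qed.

Lemma imt_kerm_decomp z : exists p, imT s p /\ kerm s (z - p).
Proof.
exists (s^T *m (invmx (s *m s^T) *m (s *m z))); split; first by eexists.
by rewrite /kerm /= mulmxBr !mulmxA mulmxV ?unitmx_mul_tr // mul1mx subrr.
Qed.

Lemma imt_orth x : (forall k, kerm s k -> dotv k x = 0) -> imT s x.
Proof.
move=> orth; have [p [sp sxp]] := imt_kerm_decomp x.
suff /eqP : x - p = 0 by rewrite subr_eq0 => /eqP ->.
apply: dotv_eq0; rewrite !dotvE bformBr -!dotvE orth //.
by rewrite dotvC dotv_imt_kerm ?subrr.
Qed.

Lemma Pi_spec z : imT s (Pi s z) /\ kerm s (z - Pi s z).
Proof.
have [] : [set p | imT s p /\ forall u, imT s u -> dotv u (z - p) = 0] (Pi s z).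
  apply: xgetPex; have [p [sp sk]] := imt_kerm_decomp z.
  by exists p; split => // u su; apply: dotv_imt_kerm.
by split => //; apply: kerm_orth.
Qed.

Lemma PiperpE z : Piperp s z = z - Pi s z.
Proof.
have [sp sk] := Pi_spec z.
apply: xget_unique; first split => //.
  by move=> k sk'; rewrite opprB addrC subrK dotvC dotv_imt_kerm.
move=> y [sy orth]; apply/eqP; rewrite -subr_eq0; apply/eqP.
have e : y - (z - Pi s z) = Pi s z - (z - y) by rewrite !opprB addrCA.
have yK : kerm s (y - (z - Pi s z)) by apply: kermB.
apply: dotv_eq0; rewrite {2}e !dotvE bformBr -!dotvE orth //.
by rewrite dotvC dotv_imt_kerm ?subrr.
Qed.

End RowSpaceKernel.

Section InverseForm.
Variables (R : realType) (n : nat).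
Implicit Types (A : 'M[R]_n) (x u : 'cV[R]_n).

Lemma sym_posdef_unitmx A : sym_posdef A -> A \in unitmx.
Proof.
move=> [_ A_pos]; rewrite -row_free_unit; apply: inj_row_free => v vA0.
suff : v^T = 0 by move/(congr1 trmx); rewrite trmxK trmx0.
apply/eqP/contraT => /A_pos.
by rewrite /qform trmxK vA0 mul0mx mxE ltxx.
Qed.

Lemma bform_invmx_mulmx A x u : A^T = A -> A \in unitmx ->
  bform (invmx A) (A *m x) u = dotv x u.
Proof.
by move=> A_sym A_unit; rewrite /bform trmx_mul A_sym -(mulmxA _ A) mulmxV // mulmx1.
Qed.

End InverseForm.

Section CoerciveForm.
Variables (R : realType) (n : nat) (B : 'M[R]_n) (alpha : R).
Hypotheses (alpha_gt0 : 0 < alpha)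
  (coercive : forall x : 'cV[R]_n, alpha * dotv x x <= bform B x x).

Lemma bform_gt0_coercive x : x != 0 -> 0 < bform B x x.
Proof. by move=> x0; rewrite (lt_le_trans _ (coercive x)) ?mulr_gt0 ?dotv_gt0. Qed.

(* Expand [0 <= |xi - alpha w|^2], using [xi . w = w^T B w >= alpha |w|^2]. *)
Lemma coercive_dual_bound (w xi : 'cV[R]_n) :
  (forall u, bform B w u = dotv xi u) -> alpha * bform B w w <= dotv xi xi.
Proof.
move=> wB; have := dotv_ge0 (xi - alpha *: w).
rewrite dotvE bform_sqrB -!dotvE (dotvC w xi) -(wB w).
have := ler_wpM2l (ltW alpha_gt0) (coercive w).
nra.
Qed.

End CoerciveForm.

Section InvariantKernel.
Variables (R : realType) (d n : nat) (s : 'M[R]_(d, n)) (A : 'M[R]_n).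
Hypotheses (A_sym : A^T = A) (A_unit : A \in unitmx).
Hypothesis invA_ker : (fun x => invmx A *m x) @` kerm s = kerm s.
Implicit Types (u k : 'cV[R]_n).

Lemma kerm_invmx_mul k : kerm s k -> kerm s (invmx A *m k).
Proof. by move=> k_ker; rewrite -invA_ker; exists k. Qed.

Lemma kerm_mulmx k : kerm s k -> kerm s (A *m k).
Proof. by rewrite -{1}invA_ker => -[k' k'_ker <-]; rewrite mulmxA mulmxV ?mul1mx. Qed.

Lemma imt_mulmx u : \rank s = d -> imT s u -> imT s (A *m u).
Proof.
move=> s_rank u_im; apply: imt_orth => // k k_ker.
by rewrite -bformE bformC A_sym bformE (dotv_imt_kerm u_im) //; apply: kerm_mulmx.
Qed.

Lemma bform_invmx_imt_kerm u k : imT s u -> kerm s k -> bform (invmx A) u k = 0.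
Proof. by move=> u_im k_ker; rewrite bformE (dotv_imt_kerm u_im) //; apply: kerm_invmx_mul. Qed.

Lemma qform_invmx_pythagoras z phi : \rank s = d -> imT s phi ->
  qform (invmx A) (z - phi)
  = qform (invmx A) (z - Pi s z) + bform (invmx A) (phi - Pi s z) (phi - Pi s z).
Proof.
move=> s_rank phi_im; have [p_im zp_ker] := Pi_spec s_rank z.
have u_im : imT s (phi - Pi s z) by apply: imtB.
have -> : z - phi = (z - Pi s z) - (phi - Pi s z) by rewrite opprB addrA subrK.
apply: bform_sqrB_orth; last exact: bform_invmx_imt_kerm.
by rewrite bform_sym ?trmx_inv ?A_sym //; apply: bform_invmx_imt_kerm.
Qed.

End InvariantKernel.

Unset Implicit Arguments.
Theorem lemma5p1 (R : realType) (d n : nat) (sigma : 'M[R]_(d, n))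
  (A : 'M[R]_n) (h : R) (Z xi : 'cV[R]_n) (alpha' : R) :
  (d < n)%N ->
  \rank sigma = d ->
  sym_posdef A ->
  0 < h ->
  imT sigma xi ->
  0 < alpha' ->
  (forall x : 'cV[R]_n, alpha' * dotv x x <= qform (invmx A) x) ->
  normv xi < h * Num.sqrt alpha' ->
  (fun x => invmx A *m x) @` kerm sigma = kerm sigma ->
  let F := fun phi : 'cV[R]_n =>
    - dotv xi phi + h * Num.sqrt (qform (invmx A) (Z - phi)) in
  let phibar := Pi sigma Z +
    (Num.sqrt (qform (invmx A) (Piperp sigma Z))
       * (Num.sqrt (h ^+ 2 - qform A xi))^-1) *: (A *m xi) in
  [/\ imT sigma phibar,
      (forall phi, imT sigma phi -> F phibar <= F phi)
    & (forall psi, imT sigma psi ->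
         (forall phi, imT sigma phi -> F psi <= F phi) -> psi = phibar)].
Proof.
move=> _ s_rank [A_sym A_pos] h_gt0 xi_im alpha_gt0 coercive xi_lt invA_ker F phibar.
have A_unit : A \in unitmx by apply: sym_posdef_unitmx.
set B := invmx A in coercive invA_ker *; set w := A *m xi.
set p := Pi sigma Z; set c := qform B (Piperp sigma Z).
have B_sym : B^T = B by rewrite trmx_inv A_sym.
have B_pos := bform_gt0_coercive alpha_gt0 coercive.
have wB u : bform B w u = dotv xi u by apply: bform_invmx_mulmx.
have xi_sqr_lt : dotv xi xi < h ^+ 2 * alpha'.
  by move: xi_lt; rewrite normv_lt ?mulr_gt0 ?sqrtr_gt0 // exprMn sqr_sqrtr // ltW.
have w_lt_h : bform B w w < h ^+ 2.
  rewrite -(ltr_pM2l alpha_gt0) (le_lt_trans (coercive_dual_bound alpha_gt0 coercive wB)) //.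
  by rewrite mulrC.
have F_reduced phi : imT sigma phi -> F phi = - dotv xi p + reduced_cost B w h c (phi - p).
  move=> phi_im; rewrite /F /reduced_cost.
  rewrite (qform_invmx_pythagoras A_sym invA_ker Z s_rank phi_im) -PiperpE // -/p -/c wB.
  have -> : dotv xi (phi - p) = dotv xi phi - dotv xi p by rewrite !dotvE bformBr.
  ring.
have phibarE : phibar = p + reduced_argmin B w h c.
  by rewrite /phibar /reduced_argmin wB -bformE.
have c_ge0 : 0 <= c by apply: bform_ge0.
have phibar_im : imT sigma phibar.
  by rewrite phibarE; apply: imtD; [apply: (Pi_spec s_rank Z).1 | apply/imtZ/imt_mulmx].
have phibar_p : phibar - p = reduced_argmin B w h c by rewrite phibarE addrC addKr.
split => // [phi phi_im | psi psi_im psi_min].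
  by rewrite !F_reduced // phibar_p lerD2l; apply: reduced_cost_min.
have := psi_min _ phibar_im; rewrite !F_reduced // phibar_p lerD2l.
move/(reduced_cost_argmin_unique B_sym B_pos h_gt0 c_ge0 w_lt_h).
by rewrite phibarE => <-; rewrite addrC subrK.
Qed.
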